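(* Let $t$ be odd with $1\le t\le k-1$, let $N$ be a positive multiple of $2^t$, $\lambda=N/2^t$, and let $p_{\max}$ be an integer with $\lambda/2^{k-t}<p_{\max}\le\lambda$. Then none of $R_1,\dots,R_k$ belongs to $G(k,2,t)^{\rm LP}$.
   Context: Variables $x_z$ are indexed by $z\in\{-1,1\}^k$. The LP relaxation of ILP (OA) for $s=2$ is: minimize $\sum_zx_z$ s.t. for each $t$-subset $J\subseteq\{1,\dots,k\}$ and each $u\in\{-1,1\}^J$, $\sum_{z:\ z_j=u_j\ \forall j\in J}x_z=\lambda$, and $0\le x_z\le p_{\max}$. With feasible set $\mathcal F$, $G(k,2,t)^{\rm LP}$ is the set of permutations $\pi$ of $\{-1,1\}^k$ with $\pi(x)\in\mathcal F$ and equal objective value for all $x\in\mathcal F$, where $\pi(x)_{\pi(z)}=x_z$. For $i\in\{1,\dots,k\}$, $R_i$ is the permutation of $\{-1,1\}^k$ given by $R_i(z_1,\dots,z_k)=(z_1z_i,\dots,z_{i-1}z_i,z_i,z_{i+1}z_i,\dots,z_kz_i)$. *)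

From HB Require Import structures.
From mathcomp Require Import all_boot all_order all_algebra all_fingroup.
From mathcomp Require Import reals.
Set Implicit Arguments. Unset Strict Implicit. Unset Printing Implicit Defensive.
Import Order.TTheory GRing.Theory Num.Theory.
Local Open Scope ring_scope.

(* Points of {-1,1}^k.  ENCODING: a sign is represented by a boolean,
   [false] <-> +1 and [true] <-> -1, i.e. the sign of b is (-1)^b = sgn b.
   Under this encoding the product of signs is [xorb]. *)
Definition pt (k : nat) := {ffun 'I_k -> bool}.

Definition sgn (b : bool) : int := if b then -1 else 1.

Lemma sgn_xor (a b : bool) : sgn (xorb a b) = sgn a * sgn b.
Proof. by case: a; case: b. Qed.

(* Feasible set F of the LP relaxation of (OA) for s = 2 with parameters
   t, lambda, p_max.  A vector u in {-1,1}^J is represented by a total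
   function on 'I_k whose values outside J are irrelevant. *)
Definition feasible (R : realType) (k t lam : nat) (pmax : int)
    (x : pt k -> R) : Prop :=
  (forall J : {set 'I_k}, #|J| = t ->
     forall u : pt k,
       \sum_(z : pt k | [forall j in J, z j == u j]) x z = lam%:R)
  /\ (forall z : pt k, 0 <= x z <= pmax%:~R).

Definition objective (R : realType) (k : nat) (x : pt k -> R) : R :=
  \sum_(z : pt k) x z.

Definition permute (R : realType) (k : nat) (pi : {perm pt k}) (x : pt k -> R)
  : pt k -> R := fun z => x ((pi^-1)%g z).

Definition inGLP (R : realType) (k t lam : nat) (pmax : int)
    (pi : {perm pt k}) : Prop :=
  forall x : pt k -> R, @feasible R k t lam pmax x ->
    @feasible R k t lam pmax (permute pi x) /\
    objective (permute pi x) = objective x.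

Definition Rfun (k : nat) (i : 'I_k) (z : pt k) : pt k :=
  [ffun j => if j == i then z i else xorb (z j) (z i)].

Lemma RfunK (k : nat) (i : 'I_k) : involutive (@Rfun k i).
Proof.
move=> z; apply/ffunP=> j; rewrite /Rfun !ffunE eqxx.
by case: eqP => [-> //| _]; case: (z j); case: (z i).
Qed.

Definition Rperm (k : nat) (i : 'I_k) : {perm pt k} :=
  perm (inv_inj (@RfunK k i)).

Lemma RpermE (k : nat) (i : 'I_k) (z : pt k) (j : 'I_k) :
  sgn (Rperm i z j) = if j == i then sgn (z i) else sgn (z j) * sgn (z i).
Proof. by rewrite permE ffunE; case: eqP => // _; rewrite sgn_xor. Qed.

From HB Require Import structures.
From mathcomp Require Import all_boot all_order all_algebra all_fingroup.
From mathcomp Require Import reals.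
From mathcomp Require Import lra.
Import Order.TTheory GRing.Theory Num.Theory.
Local Open Scope ring_scope.

(* Let chi_S be the parity character z |-> prod_(j in S) z_j.  For |S| = t+1,
   every constraint sums chi_S over a subcube fixing a t-set J not containing
   S, and flipping a coordinate of S outside J pairs the terms with opposite
   signs; so with a = lam / 2^(k-t) the point a + e chi_S is feasible
   whenever 0 < e <= min(a, pmax - a).  Taking S = J + {i} with i not in J
   and |J| = t, the coordinate z_i enters chi_S o R_i exactly t+1 times, an
   even number, so chi_S o R_i = chi_J, whose sum over any subcube fixing J
   is nonzero: the permuted point violates the constraints for J. *)

Lemma exists_subset_card (T : finType) (A : {set T}) (n : nat) :
  (n <= #|A|)%N -> exists2 B : {set T}, B \subset A & #|B| = n.
Proof.
elim: n => [|n IHn] le_nA; first by exists set0; rewrite ?sub0set ?cards0.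
have [B sBA cardB] := IHn (ltnW le_nA).
have /card_gt0P[x] : (0 < #|A :\: B|)%N.
  by rewrite cardsD (setIidPr sBA) cardB subn_gt0.
rewrite in_setD => /andP[xNB xA].
by exists (x |: B); rewrite ?subUset ?sub1set ?xA ?sBA // cardsU1 xNB cardB.
Qed.

Lemma prod_nat_of_bool (I : finType) (b : I -> bool) :
  (\prod_i b i)%N = [forall i, b i].
Proof.
case: (boolP [forall i, b i]) => [/forallP bT | /forallPn[i /negbTE bi]].
  by rewrite big1 // => i _; rewrite bT.
by rewrite (bigD1 i) //= bi.
Qed.

Lemma card_subcube {k : nat} (J : {set 'I_k}) (u : pt k) :
  #|[pred z : pt k | [forall j in J, z j == u j]]| = (2 ^ #|~: J|)%N.
Proof.
rewrite -[LHS]sum1_card big_mkcond /=.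
rewrite (eq_bigr (fun z : pt k => \prod_j ((j \in J) ==> (z j == u j)))%N); last first.
  by move=> z _; rewrite prod_nat_of_bool inE; case: forallP.
rewrite -(@bigA_distr_bigA _ 0 1 muln addn _ _
  (fun j (b : bool) => nat_of_bool ((j \in J) ==> (b == u j)))) /=.
rewrite -prod_nat_const [RHS]big_mkcond /=; apply: eq_bigr => j _.
by rewrite big_bool inE; case: (j \in J); case: (u j).
Qed.

Lemma RpermV (k : nat) (i : 'I_k) : ((Rperm i)^-1)%g = Rperm i.
Proof.
apply/permP => z; apply: (@perm_inj _ (Rperm i)).
by rewrite permKV !permE RfunK.
Qed.

Lemma signr_xorb (R : pzRingType) (b1 b2 : bool) :
  (-1) ^+ xorb b1 b2 = (-1) ^+ b1 * (-1) ^+ b2 :> R.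
Proof. by rewrite -signr_addb; case: b1. Qed.

Section Characters.
Variables (R : numFieldType) (k : nat).
Implicit Types (J S : {set 'I_k}) (u z : pt k).

Definition chi S z : R := \prod_(j in S) (-1) ^+ z j.

Definition flip (j : 'I_k) z : pt k :=
  [ffun l => if l == j then ~~ z l else z l].

Lemma flipK j : involutive (flip j).
Proof.
by move=> z; apply/ffunP=> l; rewrite !ffunE; case: eqP => // _; rewrite negbK.
Qed.

Lemma chi_flip S j z : j \in S -> chi S (flip j z) = - chi S z.
Proof.
move=> jS; rewrite /chi !(bigD1 j jS) /= ffunE eqxx signrN mulNr.
by congr (- (_ * _)); apply: eq_bigr => l /andP[_ /negbTE lj]; rewrite ffunE lj.
Qed.

Lemma chi_pm S z : chi S z = 1 \/ chi S z = -1.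
Proof.
apply: (big_ind (fun r : R => r = 1 \/ r = -1)); first by left.
  by move=> x y [->|->] [->|->]; rewrite ?mulr1 ?mulrN1 ?opprK; auto.
by move=> j _; case: (z j); auto.
Qed.

Lemma chi_setU1_Rperm i J z : i \notin J -> odd #|J| ->
  chi (i |: J) (Rperm i z) = chi J z.
Proof.
move=> iNJ odd_J; rewrite /chi big_setU1 //= permE ffunE eqxx.
rewrite (eq_bigr (fun j => (-1) ^+ z j * (-1) ^+ z i)); last first.
  move=> j jJ; have /negbTE ji : j != i by apply: contraNneq iNJ => <-.
  by rewrite ffunE ji signr_xorb.
rewrite big_split /= prodr_const mulrCA -exprS -exprM mulnC exprM.
by rewrite -signr_odd /= odd_J expr1n mulr1.
Qed.

Lemma sum_subcube_chi_eq0 J u S : ~~ (S \subset J) ->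
  \sum_(z : pt k | [forall j in J, z j == u j]) chi S z = 0.
Proof.
case/subsetPn=> j jS jNJ; set s := \sum_(z | _) _.
have flip_subcube z :
    [forall l in J, flip j z l == u l] = [forall l in J, z l == u l].
  apply: eq_forallb => l; rewrite /flip ffunE.
  by case: (eqVneq l j) => [->|//]; rewrite (negbTE jNJ).
have : s = - s.
  rewrite {1}/s (reindex_inj (can_inj (flipK j))) /= -sumrN.
  by apply: eq_big => z; rewrite ?flip_subcube // => _; rewrite chi_flip.
by move/eqP; rewrite -subr_eq0 opprK -mulr2n mulrn_eq0 => /eqP.
Qed.

Lemma sum_subcube_chi_sub J u S : S \subset J ->
  \sum_(z : pt k | [forall j in J, z j == u j]) chi S z =
  chi S u *+ 2 ^ #|~: J|.
Proof.
move=> sSJ; rewrite -(card_subcube J u) -sumr_const; apply: eq_bigr => z /forallP zu.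
apply: eq_bigr => j jS; have := zu j.
by rewrite (subsetP sSJ) //= => /eqP ->.
Qed.

Definition perturb (a e : R) S z : R := a + e * chi S z.

Lemma sum_subcube_perturb J u S (a e : R) :
  \sum_(z : pt k | [forall j in J, z j == u j]) perturb a e S z =
  a *+ 2 ^ #|~: J| + e * \sum_(z : pt k | [forall j in J, z j == u j]) chi S z.
Proof. by rewrite big_split /= -mulr_sumr sumr_const card_subcube. Qed.

End Characters.

Arguments chi {R k}.
Arguments perturb {R k}.

Lemma feasible_perturb (R : realType) (k t lam : nat) (pmax : int)
    (a e : R) (S : {set 'I_k}) :
  (t < #|S|)%N -> a *+ 2 ^ (k - t) = lam%:R -> 0 <= e <= a ->
  a + e <= pmax%:~R -> feasible t lam pmax (perturb a e S).
Proof.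
move=> lt_t_S a_lam /andP[e_ge0 le_e_a] le_ae_p; split.
  move=> J cardJ u; rewrite sum_subcube_perturb sum_subcube_chi_eq0.
    by rewrite mulr0 addr0 cardsCs setCK card_ord cardJ.
  by apply: contraTN lt_t_S => /subset_leq_card; rewrite cardJ -leqNgt.
move=> z; rewrite /perturb; have [->|->] := chi_pm R k S z.
  by rewrite mulr1; apply/andP; split; lra.
by rewrite mulrN1; apply/andP; split; lra.
Qed.

Theorem lemma10 (R : realType) (k t N : nat) (pmax : int) :
  odd t -> (1 <= t)%N -> (t <= k - 1)%N ->
  (0 < N)%N -> (2 ^ t %| N)%N ->
  let lam := (N %/ 2 ^ t)%N in
  (lam%:R / (2 ^ (k - t))%:R : R) < pmax%:~R ->
  pmax <= lam%:Z ->
  forall i : 'I_k, ~ @inGLP R k t lam pmax (Rperm i).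
Proof.
move=> odd_t _ le_t_k N_gt0 dvd_N lam lt_a_p _ i GLP.
have [J sJCi cardJ] : exists2 J : {set 'I_k}, J \subset [set~ i] & #|J| = t.
  by apply: exists_subset_card; rewrite cardsC1 card_ord -subn1.
have iNJ : i \notin J by apply/negP => /(subsetP sJCi); rewrite !inE eqxx.
have cardCJ : #|~: J| = (k - t)%N by rewrite cardsCs setCK card_ord cardJ.
set a : R := _ / _ in lt_a_p; set p : R := _%:~R in lt_a_p.
have lam_gt0 : (0 < lam)%N by rewrite divn_gt0 ?expn_gt0 // dvdn_leq.
have a_gt0 : 0 < a by rewrite divr_gt0 // ltr0n ?expn_gt0.
have a_lam : a *+ 2 ^ (k - t) = lam%:R.
  by rewrite -[LHS]mulr_natr /a divfK // pnatr_eq0 expn_eq0.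
pose e := Num.min a (p - a).
have e_gt0 : 0 < e by rewrite lt_min a_gt0 subr_gt0.
have feas : feasible t lam pmax (perturb a e (i |: J)).
  apply: feasible_perturb => //; first by rewrite cardsU1 iNJ cardJ.
    by rewrite ltW //= ge_min lexx.
  by rewrite -lerBrDl ge_min lexx orbT.
have [[/(_ J cardJ [ffun=> false]) + _] _] := GLP _ feas.
rewrite /permute RpermV (eq_bigr (perturb a e J)) => [|z _]; last first.
  by rewrite /perturb chi_setU1_Rperm ?cardJ.
rewrite sum_subcube_perturb sum_subcube_chi_sub // cardCJ -a_lam.
rewrite -{2}[a *+ _]addr0 => /addrI /eqP.
rewrite /chi big1 => [|j _]; last by rewrite ffunE.
by rewrite mulf_eq0 (gt_eqF e_gt0) mulrn_eq0 expn_eq0 oner_eq0.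
Qed.
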